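(* Let $n\ge 2$ be an integer. If $G$ is a graph on $2n+1$ vertices with at least $n^2+n$ edges such that $G$ does not contain two distinct vertices of the same degree joined by a path of length three, then $G$ is isomorphic to the complete bipartite graph $K_{n,n+1}$. (Equivalently, $K_{n,n+1}$ is the unique such graph.)
   Context: A path of length three joining vertices $a$ and $b$ is a path $a\,x\,y\,b$ with four distinct vertices and three edges $ax,xy,yb$. Graphs are finite and simple. *)

From mathcomp Require Import all_boot.
Set Implicit Arguments. Unset Strict Implicit. Unset Printing Implicit Defensive.

Definition simple_graph (T : finType) (e : rel T) : Prop :=
  symmetric e /\ irreflexive e.

Definition edge_set (T : finType) (e : rel T) : {set {set T}} :=
  [set E : {set T} | [exists x, exists y, e x y && (E == [set x; y])]].

Definition num_edges (T : finType) (e : rel T) : nat := #|edge_set e|.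

Definition deg (T : finType) (e : rel T) (x : T) : nat := #|[set y | e x y]|.

Definition path3 (T : finType) (e : rel T) (a b : T) : Prop :=
  exists x y : T, uniq [:: a; x; y; b] && [&& e a x, e x y & e y b].

Definition Kbip (n m : nat) : rel ('I_n + 'I_m)%type :=
  fun u v => match u, v with
             | inl _, inr _ | inr _, inl _ => true
             | _, _ => false
             end.

Definition graph_iso (T U : finType) (e : rel T) (f : rel U) : Prop :=
  exists g : T -> U, bijective g /\ forall x y, f (g x) (g y) = e x y.

From mathcomp Require Import all_boot zify.
Set Implicit Arguments. Unset Strict Implicit. Unset Printing Implicit Defensive.

(* Let x be a vertex of maximum degree D, I its neighbourhood and k = 2n + 1 - D
   the number of vertices outside I (x among them).  Excluding the paths y x w y'
   and x w z y1 shows that two vertices of I of equal degree have no neighbour in I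
   except each other, and that a neighbour in I of a vertex of I of degree D has no
   neighbour in I except that vertex.  A vertex of I has at most k neighbours outside
   I, so in I the degrees above k + 1 are pairwise distinct and at most two vertices
   have degree k + 1.  Double counting the n^2 + n edges bounds the total excess
   sum_{y in I} (deg y - k) from below by ((D - k)^2 - 1)/2 plus all the deficits;
   distinctness of the degrees rules this out for D - k >= 3, and for D = k + 1 it
   forces degree k on I and degree D outside I, i.e. G = K_{n,n+1} with parts the
   complement of I and I. *)

Section InjectiveCounting.
Variable T : finType.
Implicit Types (f : T -> nat) (S : {set T}).

Lemma card_le_inj_lt f S K :
  {in S &, injective f} -> {in S, forall y, f y < K} -> #|S| <= K.
Proof.
move=> f_inj f_lt; rewrite cardE -(size_map f) -(size_iota 0 K).
apply: uniq_leq_size => [|j /mapP [y]].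
  by rewrite map_inj_in_uniq ?enum_uniq // => y z; rewrite !mem_enum; apply: f_inj.
by rewrite mem_enum mem_iota => /f_lt ? ->.
Qed.

(* The values of [f] on [S] are distinct naturals, so they dominate 0, 1, ..., #|S| - 1. *)
Lemma double_sum_inj_ge f S :
  {in S &, injective f} -> #|S| * #|S|.-1 <= 2 * \sum_(y in S) f y.
Proof.
elim: {S}#|S| {-2}S (erefl #|S|) => [|s IHs] S cardS f_inj; first by rewrite cardS.
have [y0 y0S] : exists y0, y0 \in S by apply/set0Pn; rewrite -card_gt0 cardS.
case: (@arg_maxnP _ y0 [in S] f y0S) => /= y yS y_max.
have cardSy : #|S :\ y| = s by move: cardS; rewrite (cardsD1 y) yS => -[].
have f_inj' : {in S :\ y &, injective f}.
  by move=> a b /setD1P [_ aS] /setD1P [_ bS]; apply: f_inj.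
have s_le_fy : s <= f y.
  rewrite -cardSy; apply: card_le_inj_lt f_inj' _ => z /setD1P [zy zS].
  rewrite ltn_neqAle y_max // andbT; apply: contra zy => /eqP fzy.
  by apply/eqP; apply: f_inj.
have := IHs _ cardSy f_inj'; rewrite (big_setD1 y yS) /=; nia.
Qed.

Lemma sum_nat_subset (F : T -> nat) S S' :
  S \subset S' -> \sum_(y in S) F y <= \sum_(y in S') F y.
Proof. by move=> sSS'; rewrite [X in _ <= X](big_setID S) (setIidPr sSS') leq_addr. Qed.

End InjectiveCounting.

Section SimpleGraph.
Variables (T : finType) (e : rel T).
Hypotheses (e_sym : symmetric e) (e_irr : irreflexive e).

Definition nbhd (y : T) : {set T} := [set z | e y z].

Lemma in_nbhd y z : (z \in nbhd y) = e y z.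
Proof. by rewrite inE. Qed.

Lemma adj_neq y z : e y z -> y != z.
Proof. by apply: contraTneq => ->; rewrite e_irr. Qed.

Lemma nbhd_self y : (y \in nbhd y) = false.
Proof. by rewrite in_nbhd e_irr. Qed.

Lemma double_num_edges_le_sum_deg : 2 * num_edges e <= \sum_x deg e x.
Proof.
pose arcs := [set p : T * T | e p.1 p.2].
pose fwd := [set p in arcs | enum_rank p.1 < enum_rank p.2].
have -> : \sum_x deg e x = #|arcs|.
  transitivity (\sum_x \sum_y (e x y : nat)).
    apply: eq_bigr => x _; rewrite /deg -sum1_card big_mkcond.
    by apply: eq_bigr => y _; rewrite inE; case: (e x y).
  rewrite pair_big -sum1_card [RHS]big_mkcond.
  by apply: eq_bigr => -[x y] _; rewrite inE; case: (e x y).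
have edges_fwd : num_edges e <= #|fwd|.
  apply: leq_trans (leq_imset_card (fun p : T * T => [set p.1; p.2]) fwd).
  apply/subset_leq_card/subsetP => E; rewrite inE.
  case/existsP => a /existsP [b /andP [eab /eqP ->]].
  have : enum_rank a != enum_rank b by apply: contra (adj_neq eab) => /eqP/enum_rank_inj ->.
  rewrite neq_ltn => /orP [ab | ba]; apply/imsetP.
    by exists (a, b); rewrite // !inE /= eab.
  by exists (b, a); rewrite 1?setUC // !inE /= e_sym eab.
have fwd_bwd : #|fwd| <= #|arcs :\: fwd|.
  have swap_inj : injective (fun p : T * T => (p.2, p.1)) by move=> [? ?] [? ?] [-> ->].
  rewrite -(card_imset _ swap_inj); apply/subset_leq_card/subsetP => p /imsetP [[a b]].
  rewrite !inE /= => /andP [eab ab] ->.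
  by rewrite /= e_sym eab -leqNgt (ltnW ab).
have fwd_arcs : fwd \subset arcs by apply/subsetP => p; rewrite inE => /andP [].
have := cardsID fwd arcs; rewrite (setIidPr fwd_arcs); lia.
Qed.

Lemma iso_Kbip (I : {set T}) p q y0 c0 : y0 \in I -> c0 \in ~: I ->
  #|~: I| = p -> #|I| = q -> (forall u v, e u v = ((u \in I) != (v \in I))) ->
  graph_iso e (@Kbip p q).
Proof.
move=> y0I c0C cardC cardI e_cut.
pose g u : ('I_p + 'I_q)%type :=
  if u \in I then inr (cast_ord cardI (enum_rank_in y0I u))
  else inl (cast_ord cardC (enum_rank_in c0C u)).
pose h (s : ('I_p + 'I_q)%type) : T :=
  match s with
  | inl i => enum_val (cast_ord (esym cardC) i)
  | inr j => enum_val (cast_ord (esym cardI) j)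
  end.
exists g; split.
  exists h => [u | [i | j]]; rewrite /g /h.
  - case: ifPn => uI; first by rewrite cast_ordK enum_rankK_in.
    by rewrite cast_ordK enum_rankK_in // inE.
  - have := enum_valP (cast_ord (esym cardC) i); rewrite inE => /negbTE ->.
    by rewrite enum_valK_in cast_ordKV.
  - by have -> := enum_valP (cast_ord (esym cardI) j); rewrite enum_valK_in cast_ordKV.
move=> u v; rewrite e_cut /g.
by case: (u \in I); case: (v \in I).
Qed.

Section NoEqualDegreePath3.
Hypothesis no_path3 : forall a b, a != b -> deg e a = deg e b -> ~ path3 e a b.

Lemma path3_deg_neq a u v b : a != b -> a != v -> u != b ->
  e a u -> e u v -> e v b -> deg e a <> deg e b.
Proof.
move=> ab av ub au uv vb dab; apply: (no_path3 ab dab); exists u, v.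
by rewrite /= !inE !negb_or au uv vb (adj_neq au) (adj_neq uv) (adj_neq vb) ab av ub.
Qed.

Variable n : nat.
Hypotheses (n_ge2 : 2 <= n) (card_T : #|T| = 2 * n + 1).
Hypothesis num_edges_ge : n ^ 2 + n <= num_edges e.

Lemma sum_deg_ge : 2 * (n * n + n) <= \sum_y deg e y.
Proof. by apply: leq_trans double_num_edges_le_sum_deg; rewrite mulnn leq_mul2l. Qed.

Section MaxDegreeVertex.
Variable x : T.
Hypothesis x_max : forall y, deg e y <= deg e x.

Local Notation I := (nbhd x).
Local Notation D := (deg e x).
Local Notation k := #|~: I|.

Lemma maxdeg_add_outer : D + k = 2 * n + 1.
Proof. by rewrite -card_T -(cardsC I). Qed.

Lemma maxdeg_gt : n < D.
Proof.
have : \sum_y deg e y <= #|T| * D by rewrite -sum_nat_const leq_sum.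
by have := sum_deg_ge; rewrite card_T; nia.
Qed.

Lemma deg_le_inner y : deg e y <= #|nbhd y :&: I| + k.
Proof.
rewrite -[deg e y](cardsID I (nbhd y)) leq_add2l.
by apply: subset_leq_card; rewrite setDE subsetIr.
Qed.

Lemma inner_nbhd_same_deg y y' : y \in I -> y' \in I -> y != y' ->
  deg e y = deg e y' -> nbhd y' :&: I \subset [set y].
Proof.
rewrite !in_nbhd => xy xy' yy' dyy'; apply/subsetP => w.
rewrite !inE => /andP [y'w xw]; apply: contraT => wy; exfalso.
apply: (path3_deg_neq yy' _ (adj_neq xy') _ xw _ dyy'); rewrite 1?eq_sym //.
- by rewrite e_sym.
- by rewrite e_sym.
Qed.

(* A twin is a vertex of [I] of degree [D]. *)
Lemma twin_nbr_inner_nbhd y1 z : y1 \in I -> deg e y1 = D ->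
  z \in nbhd y1 :&: I -> nbhd z :&: I \subset [set y1].
Proof.
rewrite !inE => xy1 dy1 /andP [y1z xz]; apply/subsetP => w.
rewrite !inE => /andP [zw xw]; apply: contraT => wy1; exfalso.
apply: (path3_deg_neq (adj_neq xy1) (adj_neq xz) wy1 xw _ _ (esym dy1)).
- by rewrite e_sym.
- by rewrite e_sym.
Qed.

Lemma deg_inj_inner (Q : {set T}) : Q \subset I ->
  {in Q, forall z, exists2 u, u \in I :\: Q & e z u} -> {in Q &, injective (deg e)}.
Proof.
move=> QI Q_exit z z' zQ z'Q dzz'; apply: contraTeq isT => zz'.
have [u /setDP [uI uQ] z'u] := Q_exit z' z'Q.
have := subsetP (inner_nbhd_same_deg (subsetP QI z zQ) (subsetP QI z' z'Q) zz' dzz') u.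
rewrite in_setI in_nbhd z'u uI => /(_ isT) /set1P uz.
by move: uQ; rewrite uz zQ.
Qed.

Lemma deg_inj_inner_nbhd y : y \in I -> {in nbhd y :&: I &, injective (deg e)}.
Proof.
move=> yI; apply: deg_inj_inner => [|z /setIP [yz zI]]; first exact: subsetIr.
exists y; first by rewrite in_setD in_setI nbhd_self yI.
by rewrite e_sym -in_nbhd.
Qed.

Local Notation surplus := (\sum_(y in I) (deg e y - k)).
Local Notation shortfall := (\sum_(y in I) (k - deg e y)).
Local Notation deficit := (\sum_(v in ~: I) (D - deg e v)).

(* Sum the degrees over [I] and its complement; as [D + k = 2 n + 1],
   [4 (n^2 + n) - 4 D k = (D - k)^2 - 1]. *)
Lemma degree_balance : (D - k) * (D - k) + 2 * (shortfall + deficit) <= 2 * surplus + 1.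
Proof.
have inner : \sum_(y in I) deg e y + shortfall = D * k + surplus.
  by rewrite -[D]/#|I| -sum_nat_const -!big_split; apply: eq_bigr => y _ /=; lia.
have outer : \sum_(v in ~: I) deg e v + deficit = k * D.
  rewrite -big_split -sum_nat_const; apply: eq_bigr => v _ /=.
  by have := x_max v; lia.
have split : \sum_y deg e y = \sum_(y in I) deg e y + \sum_(v in ~: I) deg e v.
  by rewrite (bigID [in I]); congr (_ + _); apply: eq_bigl => v; rewrite in_setC.
have k_le_D : k <= D by have := maxdeg_gt; have := maxdeg_add_outer; lia.
have := sum_deg_ge; rewrite split; move: inner outer maxdeg_add_outer.
move: (D - k) (subnK k_le_D) => m <-; clear; nia.
Qed.

Local Notation heavy := [set y in I | k + 2 <= deg e y].
Local Notation tight := [set y in I | deg e y == k + 1].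

Lemma surplus_le : surplus <= \sum_(y in heavy) (deg e y - k) + #|tight|.
Proof.
have -> : \sum_(y in heavy) (deg e y - k) =
    \sum_(y in I) (if k + 2 <= deg e y then deg e y - k else 0).
  by rewrite -big_mkcondr; apply: eq_bigl => y; rewrite inE.
have -> : #|tight| = \sum_(y in I) (deg e y == k + 1).
  by rewrite -sum1_card -big_mkcondr; apply: eq_bigl => y; rewrite inE.
rewrite -big_split /=; apply: leq_sum => y _.
by case: ifPn; case: eqP; lia.
Qed.

Lemma deg_inj_heavy : {in heavy &, injective (deg e)}.
Proof.
move=> y y' /setIdP [yI hy] /setIdP [y'I hy'] dyy'; apply: contraTeq isT => yy'.
have := subset_leq_card (inner_nbhd_same_deg yI y'I yy' dyy').
have := deg_le_inner y'; rewrite cards1; lia.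
Qed.

Lemma card_tight_le2 : #|tight| <= 2.
Proof.
have [-> | [b bT]] := set_0Vmem tight; first by rewrite cards0.
have /setIdP [bI /eqP db] := bT.
have : 0 < #|nbhd b :&: I| by have := deg_le_inner b; lia.
case/card_gt0P => w wN.
have : tight :\ b \subset [set w].
  apply/subsetP => b' /setD1P [b'b /setIdP [b'I /eqP db']].
  have := subsetP (inner_nbhd_same_deg b'I bI b'b (etrans db' (esym db))) w wN.
  by rewrite !inE eq_sym.
move/subset_leq_card; rewrite cards1 (cardsD1 b tight) bT; lia.
Qed.

Lemma shortfall_ge (S : {set T}) : S \subset I -> {in S &, injective (deg e)} ->
  {in S, forall y, deg e y <= k} -> #|S| * #|S|.-1 <= 2 * shortfall.
Proof.
move=> SI S_inj S_le; apply: leq_trans (double_sum_inj_ge (f := fun y => k - deg e y) _) _.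
  move=> y y' yS y'S dyy'; apply: S_inj => //.
  by have := S_le y yS; have := S_le y' y'S; lia.
by rewrite leq_mul2l sum_nat_subset.
Qed.

Lemma double_surplus_heavy_le M : {in heavy, forall y, deg e y <= M} ->
  2 * \sum_(y in heavy) (deg e y - k) <= (M - k).-1 * (M - k + 2).
Proof.
move=> heavy_le.
have gap_inj : {in heavy &, injective (fun y => M - deg e y)}.
  move=> y y' yH y'H dyy'; apply: deg_inj_heavy => //.
  by have := heavy_le y yH; have := heavy_le y' y'H; lia.
have gap_sum : \sum_(y in heavy) (deg e y - k) + \sum_(y in heavy) (M - deg e y) =
    #|heavy| * (M - k).
  rewrite -big_split -sum_nat_const; apply: eq_bigr => y yH /=.
  by have := heavy_le y yH; have /setIdP [_] := yH; lia.
have card_heavy : #|heavy| <= (M - k).-1.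
  apply: card_le_inj_lt gap_inj _ => y yH.
  by have := heavy_le y yH; have /setIdP [_] := yH; lia.
have := double_sum_inj_ge gap_inj; nia.
Qed.

Lemma twin_nbhd_deg_le y1 : y1 \in I -> deg e y1 = D ->
  {in nbhd y1 :&: I, forall z, deg e z <= k + 1}.
Proof.
move=> y1I dy1 z zP; have := subset_leq_card (twin_nbr_inner_nbhd y1I dy1 zP).
by have := deg_le_inner z; rewrite cards1; lia.
Qed.

Lemma tight_pair_isolated y b : #|tight| = 2 -> y \in I -> y \notin tight ->
  b \in nbhd y -> b \notin tight.
Proof.
move=> tight2 yI y_tight; rewrite in_nbhd => yb; apply/negP => bT; have /setIdP [bI /eqP db] := bT.
have [b' /setD1P [b'b b'T]] : exists b', b' \in tight :\ b.
  by apply/card_gt0P; move: tight2; rewrite (cardsD1 b tight) bT; lia.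
have /setIdP [b'I /eqP db'] := b'T.
have := subsetP (inner_nbhd_same_deg b'I bI b'b (etrans db' (esym db))) y.
rewrite in_setI in_nbhd e_sym yb yI => /(_ isT) /set1P yb'.
by move: y_tight; rewrite yb' b'T.
Qed.

Lemma shortfall_ge_near (Q : {set T}) : Q \subset I -> {in Q &, injective (deg e)} ->
  {in Q, forall y, deg e y <= k + 1} -> #|Q|.-1 * #|Q|.-2 <= 2 * shortfall.
Proof.
move=> QI Q_inj Q_le.
have Q_tight : #|Q :&: tight| <= 1.
  apply/card_le1_eqP => y y' /setIP [yQ /setIdP [_ /eqP dy]] /setIP [y'Q /setIdP [_ /eqP dy']].
  by apply: Q_inj => //; rewrite dy dy'.
have low_inj : {in Q :\: tight &, injective (deg e)}.
  by move=> y y' /setDP [yQ _] /setDP [y'Q _]; apply: Q_inj.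
have low_le : {in Q :\: tight, forall y, deg e y <= k}.
  move=> y /setDP [yQ]; rewrite inE (subsetP QI y yQ) /=.
  by have := Q_le y yQ; lia.
have := shortfall_ge (subset_trans (subsetDl _ _) QI) low_inj low_le.
have := cardsID tight Q; nia.
Qed.

Lemma maxdeg_lt : D < k + 5.
Proof.
rewrite ltnNge; apply/negP => D_ge.
have := degree_balance; have := surplus_le; have := card_tight_le2.
have [/exists_inP [y1 y1I /eqP dy1] | /exists_inPn no_twin] :=
  boolP [exists y in I, deg e y == D].
  have := shortfall_ge_near (subsetIr _ _) (deg_inj_inner_nbhd y1I) (twin_nbhd_deg_le y1I dy1).
  have := deg_le_inner y1; rewrite dy1.
  have := double_surplus_heavy_le (M := D) (fun y _ => x_max y).
  clear -D_ge; nia.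
have heavy_lt : {in heavy, forall y, deg e y <= D - 1}.
  by move=> y /setIdP [yI _]; have := no_twin y yI; have := x_max y; lia.
have := double_surplus_heavy_le heavy_lt; clear -D_ge; nia.
Qed.

(* The inner neighbourhoods of a twin and of a vertex of degree [D - 1] are disjoint and
   carry at least five distinct degrees at most [k + 1], a shortfall of at least 6. *)
Lemma twin_excludes_submax y1 : D = k + 3 -> y1 \in I -> deg e y1 = D ->
  {in I, forall a, deg e a != D.-1}.
Proof.
move=> Dk3 y1I dy1 a0 a0I; apply/eqP; rewrite Dk3 addnS /= => da0.
have P_le := twin_nbhd_deg_le y1I dy1.
have a0P : a0 \notin nbhd y1 :&: I by apply/negP => /P_le; lia.
have y1W : y1 \notin nbhd a0 :&: I.
  apply: contra a0P => /setIP [a0y1 _].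
  by rewrite in_setI a0I andbT in_nbhd e_sym -in_nbhd.
have PW : nbhd y1 :&: I :&: (nbhd a0 :&: I) = set0.
  apply/setP => w; rewrite in_set0 in_setI; apply/negP => /andP [wP /setIP [a0w _]].
  have := subsetP (twin_nbr_inner_nbhd y1I dy1 wP) a0.
  rewrite in_setI in_nbhd e_sym -in_nbhd a0w a0I => /(_ isT) /set1P a0y1.
  by move: da0; rewrite a0y1 dy1; lia.
have y1H : y1 \in heavy by rewrite inE y1I dy1 Dk3 leq_add2l.
have a0H : a0 \in heavy by rewrite inE a0I da0 leqnn.
pose Q := nbhd y1 :&: I :|: nbhd a0 :&: I.
have QI : Q \subset I by rewrite subUset !subsetIr.
have Q_inj : {in Q &, injective (deg e)}.
  apply: deg_inj_inner => // z /setUP [/setIP [y1z _] | /setIP [a0z _]].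
  - exists y1; last by rewrite e_sym -in_nbhd.
    by rewrite in_setD in_setU negb_or y1W in_setI nbhd_self y1I.
  - exists a0; last by rewrite e_sym -in_nbhd.
    by rewrite in_setD in_setU negb_or a0P in_setI nbhd_self a0I.
have Q_le : {in Q, forall z, deg e z <= k + 1}.
  move=> z /setUP [zP | zW]; first exact: P_le.
  have /setIP [_ zI] := zW; rewrite leqNgt; apply/negP => z_big.
  have zH : z \in heavy by rewrite inE zI; lia.
  have [dz | dz] : deg e z = deg e y1 \/ deg e z = deg e a0 by have := x_max z; lia.
  - by move: y1W; rewrite -(deg_inj_heavy zH y1H dz) zW.
  - by move: zW; rewrite (deg_inj_heavy zH a0H dz) in_setI nbhd_self.
have := shortfall_ge_near QI Q_inj Q_le.
have := cardsU (nbhd y1 :&: I) (nbhd a0 :&: I); rewrite PW cards0 subn0 -/Q.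
have := deg_le_inner y1; have := deg_le_inner a0; rewrite dy1 da0.
have := double_surplus_heavy_le (M := D) (fun y _ => x_max y).
have := degree_balance; have := surplus_le; have := card_tight_le2.
rewrite Dk3 addKn; clear; nia.
Qed.

Lemma twinless_excludes_submax : D = k + 3 -> {in I, forall y, deg e y < D} ->
  {in I, forall a, deg e a != D.-1}.
Proof.
move=> Dk3 no_twin a0 a0I; apply/eqP; rewrite Dk3 addnS /= => da0.
have heavy_lt : {in heavy, forall y, deg e y <= k + 2}.
  by move=> y /setIdP [yI _]; have := no_twin y yI; lia.
have a0H : a0 \in heavy by rewrite inE a0I da0 leqnn.
have tight2 : #|tight| = 2.
  have := double_surplus_heavy_le heavy_lt; have := degree_balance.
  have := surplus_le; have := card_tight_le2; rewrite Dk3 !addKn /=; lia.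
have a0_tight : a0 \notin tight by rewrite inE da0; lia.
have W_le : {in nbhd a0 :&: I, forall w, deg e w <= k}.
  move=> w wW; have /setIP [a0w wI] := wW.
  have w_tight := tight_pair_isolated tight2 a0I a0_tight a0w.
  rewrite leqNgt; apply/negP => w_big.
  have wH : w \in heavy.
    by rewrite inE wI; move: w_tight; rewrite inE wI /=; lia.
  have dw : deg e w = deg e a0 by have := heavy_lt w wH; have /setIdP [_] := wH; lia.
  by move: a0w; rewrite (deg_inj_heavy wH a0H dw) nbhd_self.
have := shortfall_ge (subsetIr _ _) (deg_inj_inner_nbhd a0I) W_le.
have := deg_le_inner a0; have := degree_balance; have := surplus_le.
have := double_surplus_heavy_le heavy_lt; rewrite da0 Dk3 !addKn /=; nia.
Qed.

Lemma submaxless_excludes_twin : D = k + 3 -> {in I, forall a, deg e a != D.-1} ->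
  {in I, forall y, deg e y < D}.
Proof.
move=> Dk3 no_submax y1 y1I; rewrite ltn_neqAle x_max andbT; apply/eqP => dy1.
have y1H : y1 \in heavy by rewrite inE y1I dy1 Dk3 leq_add2l.
have heavy_y1 : heavy \subset [set y1].
  apply/subsetP => y yH; have /setIdP [yI y_ge] := yH; rewrite inE.
  apply/eqP/(deg_inj_heavy yH y1H); rewrite dy1.
  by have := x_max y; have := no_submax y yI; lia.
have := sum_nat_subset (fun y => deg e y - k) heavy_y1; rewrite big_set1 dy1 Dk3 addKn.
have := degree_balance; have := surplus_le; rewrite Dk3 addKn /= => balance sur H3.
have y1_tight : y1 \notin tight by rewrite inE dy1 Dk3; lia.
have P_inj := deg_inj_inner_nbhd y1I.
have := deg_le_inner y1; rewrite dy1 Dk3 => P_ge.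
have [tight2 | tight_lt2] := eqVneq #|tight| 2.
  have P_le : {in nbhd y1 :&: I, forall z, deg e z <= k}.
    move=> z zP; have /setIP [y1z zI] := zP.
    have := tight_pair_isolated tight2 y1I y1_tight y1z.
    by rewrite inE zI /=; have := twin_nbhd_deg_le y1I dy1 zP; lia.
  by have := shortfall_ge (subsetIr _ _) P_inj P_le; nia.
have := shortfall_ge_near (subsetIr _ _) P_inj (twin_nbhd_deg_le y1I dy1).
have := card_tight_le2; nia.
Qed.

Lemma maxdeg_neq : D != k + 3.
Proof.
apply/eqP => Dk3.
have no_submax : {in I, forall a, deg e a != D.-1}.
  have [/exists_inP [y1 y1I /eqP dy1] | /exists_inPn no_twin] :=
    boolP [exists y in I, deg e y == D].
    exact: twin_excludes_submax Dk3 y1I dy1.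
  by apply: twinless_excludes_submax => // y yI; rewrite ltn_neqAle no_twin ?x_max.
have no_twin := submaxless_excludes_twin Dk3 no_submax.
have heavy_empty : {in heavy, forall y, deg e y <= k + 1}.
  by move=> y /setIdP [yI _]; have := no_twin y yI; have := no_submax y yI; lia.
have := double_surplus_heavy_le heavy_empty; have := degree_balance.
by have := surplus_le; have := card_tight_le2; rewrite Dk3 !addKn /=; lia.
Qed.

Lemma outer_subset_nbhd y : #|nbhd y :&: I| + k <= deg e y -> ~: I \subset nbhd y.
Proof.
move=> y_big; have out_sub : nbhd y :\: I \subset ~: I by rewrite setDE subsetIr.
have /eqP <- : nbhd y :\: I == ~: I.
  by rewrite eqEcard out_sub /=; move: y_big; rewrite -[deg e y](cardsID I (nbhd y)); lia.
exact: subsetDl.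
Qed.

Lemma outer_other : D = k + 1 -> exists2 v, v \in ~: I & v != x.
Proof.
move=> Dk1; have x_out : x \in ~: I by rewrite in_setC nbhd_self.
have : 0 < #|~: I :\ x|.
  by move: (cardsD1 x (~: I)); rewrite x_out; have := maxdeg_add_outer; lia.
by case/card_gt0P => v /setD1P [vx vC]; exists v.
Qed.

Lemma card_tight_neq2 : D = k + 1 -> #|tight| != 2.
Proof.
move=> Dk1; apply/eqP => tight2.
have /card_gt1P [b [b' [bT b'T bb']]] : 1 < #|tight| by rewrite tight2.
have /setIdP [bI /eqP db] := bT; have /setIdP [b'I /eqP db'] := b'T.
have outer_b : ~: I \subset nbhd b.
  apply: outer_subset_nbhd; rewrite db addnC leq_add2l -(cards1 b').
  by apply/subset_leq_card/inner_nbhd_same_deg; rewrite // 1?eq_sym // db db'.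
have outer_b' : ~: I \subset nbhd b'.
  apply: outer_subset_nbhd; rewrite db' addnC leq_add2l -(cards1 b).
  by apply/subset_leq_card/inner_nbhd_same_deg; rewrite // db db'.
have [v vC vx] := outer_other Dk1.
move: bI b'I; rewrite !in_nbhd => xb xb'.
have b'v : e b' v by rewrite -in_nbhd (subsetP outer_b').
have vb : e v b by rewrite e_sym -in_nbhd (subsetP outer_b).
have dxb : deg e x = deg e b by rewrite db Dk1.
by apply: (path3_deg_neq (adj_neq xb) _ _ xb' b'v vb dxb); rewrite eq_sym.
Qed.

Lemma twin_outer_deficit b w : b \in I -> deg e b = D -> w \in nbhd b :&: I ->
  #|(nbhd b :\: I) :\ x| <= deficit.
Proof.
rewrite in_nbhd => xb dbD /setIP [bw wI]; rewrite in_nbhd in bw; rewrite in_nbhd in wI.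
apply: (@leq_trans (\sum_(v in (nbhd b :\: I) :\ x) (D - deg e v))).
  rewrite -sum1_card; apply: leq_sum => v /setD1P [vx /setDP [bv vI]].
  rewrite subn_gt0 ltn_neqAle x_max andbT; apply/eqP => dxv.
  have wv : w != v by apply: contraNneq vI => <-; rewrite in_nbhd.
  rewrite in_nbhd in bv.
  by apply: (path3_deg_neq _ (adj_neq xb) wv wI _ bv (esym dxv)); rewrite 1?e_sym // eq_sym.
by apply: sum_nat_subset; apply/subsetP => v /setD1P [_ /setDP [_ vI]]; rewrite in_setC.
Qed.

Lemma single_tight_shape b : D = k + 1 -> tight = [set b] ->
  [/\ #|nbhd b :&: I| = 1, k = 2 & shortfall = 0].
Proof.
move=> Dk1 tightE.
have /setIdP [bI /eqP db] : b \in tight by rewrite tightE set11.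
have dbD : deg e b = D by rewrite db Dk1.
have xb : e x b by rewrite -in_nbhd.
have W_deg : {in nbhd b :&: I, forall w, 2 <= deg e w <= k}.
  move=> w wW; have /setIP [bw wI] := wW.
  have w_tight : w \notin tight.
    by rewrite tightE in_set1; apply: contraTneq bw => ->; rewrite nbhd_self.
  have xb_w : [set x; b] \subset nbhd w.
    by rewrite subUset !sub1set !in_nbhd ![e w _]e_sym -!in_nbhd wI bw.
  have := subset_leq_card xb_w; rewrite cards2 (adj_neq xb) -[#|nbhd w|]/(deg e w).
  have := twin_nbhd_deg_le bI dbD wW; move: w_tight; rewrite inE wI /=; lia.
have W_inj := deg_inj_inner_nbhd bI.
have W_card : #|nbhd b :&: I| <= k.-1.
  apply: (card_le_inj_lt (f := fun w => k - deg e w)) => [w w' wW w'W dww'|w wW].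
    by apply: W_inj => //; have := W_deg w wW; have := W_deg w' w'W; lia.
  by have := W_deg w wW; lia.
have W_sh := shortfall_ge (subsetIr _ _) W_inj (fun w wW => proj2 (andP (W_deg w wW))).
have W_pos : 0 < #|nbhd b :&: I| by have := deg_le_inner b; lia.
have /card_gt0P [w0 w0W] := W_pos.
have def_ge := twin_outer_deficit bI dbD w0W.
have := cardsD1 x (nbhd b :\: I); rewrite -[deg e b](cardsID I (nbhd b)) in db.
have := degree_balance; have := surplus_le; rewrite tightE cards1.
have := double_surplus_heavy_le (M := D) (fun y _ => x_max y).
have := maxdeg_add_outer; rewrite (_ : D - k = 1) /=; last by lia.
case: (x \in _) => /= *; split; nia.
Qed.

(* By the counting only [n = 2] remains, where the third vertex [c] of [I] yields the
   path [x c v b]. *)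
Lemma card_tight_neq1 : D = k + 1 -> #|tight| != 1.
Proof.
move=> Dk1; apply/negP => /cards1P [b tightE].
have [W1 k2 sh0] := single_tight_shape Dk1 tightE.
have /setIdP [bI /eqP db] : b \in tight by rewrite tightE set11.
have dbD : deg e b = D by rewrite db Dk1.
have /eqP /cards1P [w0 W_w0] := W1.
have w0W : w0 \in nbhd b :&: I by rewrite W_w0 set11.
have /setIP [bw0 w0I] := w0W.
have bw0_I : [set b; w0] \subset I by rewrite subUset !sub1set bI w0I.
have b_w0 : b != w0 by apply: contraTneq bw0 => <-; rewrite nbhd_self.
have /cards1P [c restE] : #|I :\: [set b; w0]| == 1.
  by rewrite cardsD (setIidPr bw0_I) cards2 b_w0 -[#|I|]/D Dk1 k2.
have /setDP [cI c_bw0] : c \in I :\: [set b; w0] by rewrite restE set11.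
have Nc0 : nbhd c :&: I = set0.
  apply/setP => u; rewrite in_set0; apply/negP => /setIP [cu uI].
  have [/set2P [ub | uw0] | u_bw0] := boolP (u \in [set b; w0]).
  - have : c \in nbhd b :&: I by rewrite in_setI cI in_nbhd e_sym -in_nbhd -ub cu.
    by rewrite W_w0 => /set1P cw0; rewrite cw0 !inE eqxx orbT in c_bw0.
  - have := subsetP (twin_nbr_inner_nbhd bI dbD w0W) c.
    rewrite in_setI cI in_nbhd e_sym -in_nbhd -uw0 cu => /(_ isT) /set1P cb.
    by rewrite cb !inE eqxx in c_bw0.
  - have : u \in I :\: [set b; w0] by rewrite in_setD u_bw0 uI.
    by rewrite restE => /set1P uc; rewrite uc nbhd_self in cu.
have outer_c : ~: I \subset nbhd c.
  apply: outer_subset_nbhd; rewrite Nc0 cards0 add0n.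
  by move/eqP: sh0; rewrite sum_nat_eq0 => /forall_inP /(_ c cI) /eqP; lia.
have outer_b : ~: I \subset nbhd b.
  by apply: outer_subset_nbhd; rewrite W1 db addnC.
have [v vC vx] := outer_other Dk1.
have xc : e x c by rewrite -in_nbhd.
have xb : e x b by rewrite -in_nbhd.
have cv : e c v by rewrite -in_nbhd (subsetP outer_c).
have vb : e v b by rewrite e_sym -in_nbhd (subsetP outer_b).
have cb : c != b by apply: contraNneq c_bw0 => ->; rewrite !inE eqxx.
by apply: (path3_deg_neq (adj_neq xb) _ cb xc cv vb (esym dbD)); rewrite eq_sym.
Qed.

Lemma regular_sides_of_no_tight : D = k + 1 -> tight = set0 ->
  {in I, forall y, deg e y = k} /\ {in ~: I, forall v, deg e v = D}.
Proof.
move=> Dk1 tight0.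
have : shortfall + deficit = 0.
  have := degree_balance; have := surplus_le; rewrite tight0 cards0 addn0.
  have := double_surplus_heavy_le (M := D) (fun y _ => x_max y).
  by rewrite (_ : D - k = 1) /=; lia.
move/eqP; rewrite addn_eq0 !sum_nat_eq0 => /andP [/forall_inP sh0 /forall_inP def0].
split=> [y yI | v vO]; last by have := x_max v; move/eqP: (def0 v vO); lia.
have : y \notin tight by rewrite tight0 in_set0.
by rewrite inE yI /=; have := x_max y; move/eqP: (sh0 y yI); lia.
Qed.

Lemma cut_of_no_tight : D = k + 1 -> tight = set0 ->
  forall u v, e u v = ((u \in I) != (v \in I)).
Proof.
move=> Dk1 tight0; have [degI degO] := regular_sides_of_no_tight Dk1 tight0.
have I_indep y y' : y \in I -> y' \in I -> ~~ e y y'.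
  move=> yI y'I; apply/negP => yy'.
  have /card_gt0P [z /setDP [zI z_yy']] : 0 < #|I :\: [set y; y']|.
    rewrite cardsD -[#|I|]/D; have := subset_leq_card (subsetIr I [set y; y']).
    by rewrite cards2; have := maxdeg_add_outer; lia.
  have zy' : z != y' by apply: contraNneq z_yy' => ->; rewrite !inE eqxx orbT.
  have := subsetP (inner_nbhd_same_deg zI y'I zy' (etrans (degI z zI) (esym (degI y' y'I)))) y.
  rewrite in_setI in_nbhd e_sym yy' yI => /(_ isT) /set1P yz.
  by rewrite yz !inE eqxx in z_yy'.
have nbhd_inner y : y \in I -> nbhd y = ~: I.
  move=> yI; apply/eqP; rewrite eqEcard -[#|nbhd y|]/(deg e y) degI // leqnn andbT.
  by apply/subsetP => z; rewrite in_nbhd in_setC; apply: contraTN => /(I_indep y z yI).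
have nbhd_outer u : u \notin I -> nbhd u = I.
  move=> uO; apply/eqP; rewrite eq_sym eqEcard -[#|nbhd u|]/(deg e u).
  rewrite degO ?in_setC // leqnn andbT.
  apply/subsetP => y yI; rewrite in_nbhd e_sym -in_nbhd nbhd_inner //.
  by rewrite in_setC.
move=> u v; rewrite -in_nbhd; case: (boolP (u \in I)) => uI.
  by rewrite nbhd_inner // in_setC.
by rewrite nbhd_outer //; case: (v \in I).
Qed.

Lemma maxdeg_eq : D = k + 1.
Proof.
by have := maxdeg_lt; have := maxdeg_neq; have := maxdeg_add_outer; have := maxdeg_gt; lia.
Qed.

Lemma cut_at_maxdeg u v : e u v = ((u \in I) != (v \in I)).
Proof.
have Dk1 := maxdeg_eq; apply: (cut_of_no_tight Dk1); apply/eqP; rewrite -cards_eq0.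
move: card_tight_le2 (card_tight_neq1 Dk1) (card_tight_neq2 Dk1).
by case: #|tight| => [|[|[|m]]].
Qed.

End MaxDegreeVertex.

Lemma Kbip_of_no_path3 : graph_iso e (@Kbip n n.+1).
Proof.
have /card_gt0P [x0 _] : 0 < #|T| by rewrite card_T addn1.
have [x _ x_max] := @arg_maxnP T x0 predT (deg e) isT.
have {}x_max y : deg e y <= deg e x := x_max y isT.
have := maxdeg_add_outer x; rewrite (@maxdeg_eq x x_max) => add_outer.
have cardI : #|nbhd x| = n.+1 by rewrite -[#|nbhd x|]/(deg e x) (@maxdeg_eq x x_max); lia.
have cardO : #|~: nbhd x| = n by lia.
have /card_gt0P [y0 y0I] : 0 < #|nbhd x| by rewrite cardI.
have x_out : x \in ~: nbhd x by rewrite in_setC nbhd_self.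
exact: iso_Kbip y0I x_out cardO cardI (@cut_at_maxdeg x x_max).
Qed.

End NoEqualDegreePath3.
End SimpleGraph.

Theorem theorem1p3 (n : nat) (T : finType) (e : rel T) :
  2 <= n ->
  simple_graph e ->
  #|T| = 2 * n + 1 ->
  n ^ 2 + n <= num_edges e ->
  (forall a b : T, a != b -> deg e a = deg e b -> ~ path3 e a b) ->
  graph_iso e (@Kbip n n.+1).
Proof.
move=> n_ge2 [e_sym e_irr] card_T num_edges_ge no_path3.
exact: Kbip_of_no_path3.
Qed.
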